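(* Let $X_n,Y_n,X,Y$ ($n=1,2,\dots$) be mm-spaces and $F_n,F\in\mathcal F^2$ with $F_n\to F$ pointwise and such that for every $s,t\ge0$, $\lim_{n\to\infty}\big(F_n(s,t)-\inf_{s\le s',t\le t'}F_n(s',t')\big)=0$. Let $p_n\colon X_n\to X$ and $q_n\colon Y_n\to Y$ be Borel maps such that $p_n$ is 1-Lipschitz up to $\varepsilon_n$, $q_n$ is 1-Lipschitz up to $\delta_n$, $\pi((p_n)_*m_{X_n},m_X)\le\varepsilon_n$ and $\pi((q_n)_*m_{Y_n},m_Y)\le\delta_n$, where $\varepsilon_n,\delta_n\to0$. Then there is a sequence $\eta_n\to0$ such that $p_n\times q_n\colon X_n\times_{F_n}Y_n\to X\times_FY$, $(x,y)\mapsto(p_n(x),q_n(y))$, is 1-Lipschitz up to $\eta_n$.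
   Context: An mm-space is a triple $(X,d_X,m_X)$ with $(X,d_X)$ complete separable metric space and $m_X$ a Borel probability measure. $\mathcal F^2$: continuous $F\colon[0,+\infty)^2\to[0,+\infty)$ such that $d_F((x,y),(x',y')):=F(d_X(x,x'),d_Y(y,y'))$ is a metric on $X\times Y$ for all metric spaces; $X\times_FY:=(X\times Y,d_F,m_X\otimes m_Y)$. A map $f\colon X\to Y$ from an mm-space to a metric space is 1-Lipschitz up to (an additive error) $\varepsilon\ge0$ if there is a Borel $X_0\subset X$ with $m_X(X_0)\ge1-\varepsilon$ and $d_Y(f(x),f(x'))\le d_X(x,x')+\varepsilon$ for all $x,x'\in X_0$. $\pi$ is the Prokhorov distance: $\pi(\mu,\nu)$ is the infimum of $\varepsilon>0$ with $\mu(U_\varepsilon(A))\ge\nu(A)-\varepsilon$ for all Borel $A$, where $U_\varepsilon(A)=\{x:d(x,A)<\varepsilon\}$. *)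

From Stdlib Require Import Reals.
Open Scope R_scope.

Definition is_metric {T : Type} (d : T -> T -> R) : Prop :=
  (forall x y, 0 <= d x y) /\
  (forall x y, d x y = 0 <-> x = y) /\
  (forall x y, d x y = d y x) /\
  (forall x y z, d x z <= d x y + d y z).

Definition cauchy_seq {T : Type} (d : T -> T -> R) (u : nat -> T) : Prop :=
  forall eps, 0 < eps -> exists N, forall m n, (N <= m)%nat -> (N <= n)%nat ->
    d (u m) (u n) < eps.

Definition seq_converges {T : Type} (d : T -> T -> R) (u : nat -> T) (x : T) : Prop :=
  forall eps, 0 < eps -> exists N, forall n, (N <= n)%nat -> d (u n) x < eps.

Definition complete_metric {T : Type} (d : T -> T -> R) : Prop :=
  forall u, cauchy_seq d u -> exists x, seq_converges d u x.

Definition separable_metric {T : Type} (d : T -> T -> R) : Prop :=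
  exists D : nat -> T, forall x eps, 0 < eps -> exists n, d x (D n) < eps.

Definition open_set {T : Type} (d : T -> T -> R) (O : T -> Prop) : Prop :=
  forall x, O x -> exists r, 0 < r /\ forall y, d x y < r -> O y.

Definition sigma_algebra {T : Type} (S : (T -> Prop) -> Prop) : Prop :=
  S (fun _ => True) /\
  (forall A, S A -> S (fun x => ~ A x)) /\
  (forall A : nat -> T -> Prop, (forall i, S (A i)) -> S (fun x => exists i, A i x)).

Definition borel {T : Type} (d : T -> T -> R) (A : T -> Prop) : Prop :=
  forall S : (T -> Prop) -> Prop, sigma_algebra S ->
    (forall O, open_set d O -> S O) -> S A.

Definition borel_map {T U : Type} (dT : T -> T -> R) (dU : U -> U -> R)
  (f : T -> U) : Prop :=
  forall A, borel dU A -> borel dT (fun x => A (f x)).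

(** Borel probability measures (values on non-Borel sets are irrelevant). *)
Definition prob_measure {T : Type} (d : T -> T -> R) (m : (T -> Prop) -> R) : Prop :=
  (forall A, borel d A -> 0 <= m A) /\
  m (fun _ => True) = 1 /\
  (forall A : nat -> T -> Prop,
     (forall i, borel d (A i)) ->
     (forall i j x, i <> j -> A i x -> A j x -> False) ->
     infinite_sum (fun i => m (A i)) (m (fun x => exists i, A i x))).

Record mmspace : Type := MMSpace {
  mm_carrier :> Type;
  mm_dist : mm_carrier -> mm_carrier -> R;
  mm_meas : (mm_carrier -> Prop) -> R;
  mm_metric : is_metric mm_dist;
  mm_complete : complete_metric mm_dist;
  mm_separable : separable_metric mm_dist;
  mm_prob : prob_measure mm_dist mm_meas
}.

Definition continuous_on_quadrant (F : R -> R -> R) : Prop :=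
  forall s t, 0 <= s -> 0 <= t -> forall eps, 0 < eps ->
    exists delta, 0 < delta /\ forall s' t', 0 <= s' -> 0 <= t' ->
      Rabs (s' - s) < delta -> Rabs (t' - t) < delta ->
      Rabs (F s' t' - F s t) < eps.

Definition dF (F : R -> R -> R) {T U : Type} (dT : T -> T -> R) (dU : U -> U -> R)
  (a b : T * U) : R := F (dT (fst a) (fst b)) (dU (snd a) (snd b)).

Definition in_F2 (F : R -> R -> R) : Prop :=
  continuous_on_quadrant F /\
  (forall s t, 0 <= s -> 0 <= t -> 0 <= F s t) /\
  (forall (T U : Type) (dT : T -> T -> R) (dU : U -> U -> R),
     is_metric dT -> is_metric dU -> is_metric (dF F dT dU)).

Definition is_product_measure (F : R -> R -> R) (X Y : mmspace)
  (mu : (X * Y -> Prop) -> R) : Prop :=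
  prob_measure (dF F (mm_dist X) (mm_dist Y)) mu /\
  (forall A B, borel (mm_dist X) A -> borel (mm_dist Y) B ->
     mu (fun z => A (fst z) /\ B (snd z)) = mm_meas X A * mm_meas Y B).

Definition lip1_up_to {T U : Type} (dT : T -> T -> R) (m : (T -> Prop) -> R)
  (dU : U -> U -> R) (f : T -> U) (eps : R) : Prop :=
  exists X0 : T -> Prop, borel dT X0 /\ 1 - eps <= m X0 /\
    forall x x', X0 x -> X0 x' -> dU (f x) (f x') <= dT x x' + eps.

Definition pushforward {T U : Type} (f : T -> U) (m : (T -> Prop) -> R)
  : (U -> Prop) -> R := fun A => m (fun x => A (f x)).

Definition nbhd {T : Type} (d : T -> T -> R) (eps : R) (A : T -> Prop) : T -> Prop :=
  fun x => exists a, A a /\ d x a < eps.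

Definition prokhorov_cond {T : Type} (d : T -> T -> R) (mu nu : (T -> Prop) -> R)
  (eps : R) : Prop :=
  forall A, borel d A -> nu A - eps <= mu (nbhd d eps A).

(** pi(mu,nu) <= eps, where pi(mu,nu) is the infimum of the eps' > 0
    satisfying prokhorov_cond. *)
Definition prokhorov_le {T : Type} (d : T -> T -> R) (mu nu : (T -> Prop) -> R)
  (eps : R) : Prop :=
  forall e', eps < e' -> exists e, 0 < e /\ e < e' /\ prokhorov_cond d mu nu e.

Definition is_glb (E : R -> Prop) (l : R) : Prop :=
  (forall x, E x -> l <= x) /\ (forall b, (forall x, E x -> b <= x) -> b <= l).

From Pilot Require Import Defs.
From Stdlib Require Import Reals Lra Lia Classical FunctionalExtensionality PropExtensionality.
Open Scope R_scope.

(* Since F_n -> F and F_n is asymptotically nondecreasing, the limit F is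
   nondecreasing and F(s0, t0) - g <= F_n(s, t) for s >= s0, t >= t0 and n large.
   On a finite grid this holds uniformly in the grid point, and together with
   the subadditivity of F and F(u, v) -> 0 at the origin it yields
   F(a, b) <= F_n(s, t) + g whenever a, b stay bounded, a <= s + rho and
   b <= t + rho.  Tightness of m_X and m_Y combined with the Prokhorov bounds
   keeps p_n and q_n in a bounded region off a set of small measure, so on a
   product of good sets of measure close to 1 the distances satisfy exactly
   these hypotheses with s, t the distances in X_n, Y_n. *)

Lemma pred_ext {T : Type} (A B : T -> Prop) : (forall x, A x <-> B x) -> A = B.
Proof.
  intros H; apply functional_extensionality; intros x.
  apply propositional_extensionality; auto.
Qed.

Section BorelSets.
Context {T : Type} (d : T -> T -> R).

Lemma open_borel O : Defs.open_set d O -> borel d O.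
Proof. intros HO S _ Hop; exact (Hop O HO). Qed.

Lemma borel_compl A : borel d A -> borel d (fun x => ~ A x).
Proof. intros HA S HS Hop; apply (proj1 (proj2 HS)), HA; auto. Qed.

Lemma borel_union (A : nat -> T -> Prop) :
  (forall i, borel d (A i)) -> borel d (fun x => exists i, A i x).
Proof. intros HA S HS Hop; apply (proj2 (proj2 HS)); intros i; apply HA; auto. Qed.

Lemma borel_empty : borel d (fun _ => False).
Proof. apply open_borel; intros x []. Qed.

Lemma borel_inter A B : borel d A -> borel d B -> borel d (fun x => A x /\ B x).
Proof.
  intros HA HB.
  pose (C := fun i : nat => match i with 0 => fun x => ~ A x | _ => fun x => ~ B x end).
  assert (E : (fun x => A x /\ B x) = (fun x => ~ exists i, C i x)).
  { apply pred_ext; intros x; split.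
    - intros [Ha Hb] [[|i] Hi]; auto.
    - intros H; split; apply NNPP; intros Hn; apply H;
        [exists 0%nat | exists 1%nat]; exact Hn. }
  rewrite E; apply borel_compl, borel_union.
  intros [|i]; apply borel_compl; auto.
Qed.

End BorelSets.

Lemma borel_map_open_preimage {T U : Type} (dT : T -> T -> R) (dU : U -> U -> R)
  (f : T -> U) :
  (forall O, Defs.open_set dU O -> Defs.open_set dT (fun x => O (f x))) ->
  borel_map dT dU f.
Proof.
  intros Hf A HA; apply (HA (fun C => borel dT (fun x => C (f x)))).
  - split; [|split].
    + intros S HS _; exact (proj1 HS).
    + intros C; apply borel_compl.
    + intros C; apply (borel_union dT (fun i x => C i (f x))).
  - intros O HO; apply open_borel, Hf, HO.
Qed.

Lemma infinite_sum_const_eq0 (c l : R) : infinite_sum (fun _ => c) l -> c = 0.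
Proof.
  intros Hs; apply NNPP; intros Hc.
  destruct (Hs (Rabs c / 2)) as [N HN]; [pose proof (Rabs_pos_lt c Hc); lra|].
  pose proof (HN N (le_n _)) as H1; pose proof (HN (S N) (le_S _ _ (le_n _))) as H2.
  unfold Rdist in H1, H2; simpl sum_f_R0 in H2.
  set (u := sum_f_R0 (fun _ => c) N) in *.
  assert (Rabs c < Rabs c); [|lra].
  revert H1 H2; unfold Rabs; repeat destruct Rcase_abs; lra.
Qed.

Section ProbMeasure.
Context {T : Type} (d : T -> T -> R) (m : (T -> Prop) -> R) (Hm : prob_measure d m).

Lemma prob_nonneg A : borel d A -> 0 <= m A.
Proof. exact (proj1 Hm A). Qed.

Lemma prob_empty : m (fun _ => False) = 0.
Proof.
  pose proof (proj2 (proj2 Hm) (fun _ _ => False) (fun _ => borel_empty d)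
                (fun _ _ _ _ h _ => h)) as Hs.
  replace (fun x : T => exists i : nat, False) with (fun _ : T => False) in Hs
    by (apply pred_ext; intros x; split; [intros []|intros [_ []]]).
  exact (infinite_sum_const_eq0 _ _ Hs).
Qed.

Lemma prob_disjoint_union A B : borel d A -> borel d B ->
  (forall x, A x -> B x -> False) -> m (fun x => A x \/ B x) = m A + m B.
Proof.
  intros HA HB Hd.
  pose (C := fun i : nat => match i with 0 => A | 1 => B | _ => fun _ => False end).
  assert (HC : forall i, borel d (C i)) by (intros [|[|i]]; auto; apply borel_empty).
  assert (HD : forall i j x, i <> j -> C i x -> C j x -> False)
    by (intros [|[|i]] [|[|j]] x Hij; simpl; try tauto; eauto).
  pose proof (proj2 (proj2 Hm) C HC HD) as Hs.
  replace (fun x => exists i, C i x) with (fun x => A x \/ B x) in Hs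
    by (apply pred_ext; intros x; split;
        [intros [H|H]; [exists 0%nat|exists 1%nat]; exact H
        |intros [[|[|i]] Hi]; simpl in Hi; tauto]).
  apply (uniqueness_sum _ _ _ Hs).
  assert (Hpart : forall n, sum_f_R0 (fun i => m (C i)) (S n) = m A + m B).
  { induction n as [|n IH]; [reflexivity|].
    simpl sum_f_R0 in *; rewrite IH; simpl; rewrite prob_empty; ring. }
  intros e He; exists 1%nat; intros [|n] Hn; [lia|].
  rewrite Hpart; unfold Rdist; rewrite Rminus_diag, Rabs_R0; exact He.
Qed.

Lemma prob_compl A : borel d A -> m (fun x => ~ A x) = 1 - m A.
Proof.
  intros HA; pose proof (proj1 (proj2 Hm)) as H1.
  replace (fun _ : T => True) with (fun x => A x \/ ~ A x) in H1
    by (apply pred_ext; intros x; split; auto; intros _; apply classic).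
  rewrite prob_disjoint_union in H1; auto using borel_compl; lra.
Qed.

Lemma prob_inter_ge A B : borel d A -> borel d B ->
  m A + m B - 1 <= m (fun x => A x /\ B x).
Proof.
  intros HA HB.
  assert (HAsplit : m A = m (fun x => A x /\ B x) + m (fun x => A x /\ ~ B x)).
  { rewrite <- prob_disjoint_union; auto using borel_inter, borel_compl; [|tauto].
    f_equal; apply pred_ext; intros x; split; [|tauto].
    intros a; destruct (classic (B x)); tauto. }
  assert (HnB : m (fun x => ~ B x)
                = m (fun x => A x /\ ~ B x) + m (fun x => ~ A x /\ ~ B x)).
  { rewrite <- prob_disjoint_union; auto using borel_inter, borel_compl; [|tauto].
    f_equal; apply pred_ext; intros x; split; [|tauto].
    intros a; destruct (classic (A x)); tauto. }
  pose proof (prob_nonneg _ (borel_inter d _ _ (borel_compl d A HA) (borel_compl d B HB))).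
  rewrite prob_compl in HnB; auto; lra.
Qed.

End ProbMeasure.
Section MetricSets.
Context {T : Type} (d : T -> T -> R) (Hd : is_metric d).

Lemma open_ball x0 r : Defs.open_set d (fun x => d x0 x < r).
Proof.
  destruct Hd as [_ [_ [_ Ht]]]; intros x Hx; exists (r - d x0 x); split; [lra|].
  intros y Hy; pose proof (Ht x0 x y); lra.
Qed.

Lemma open_nbhd e A : Defs.open_set d (nbhd d e A).
Proof.
  destruct Hd as [_ [_ [Hs Ht]]]; intros x [a [Ha Hxa]].
  exists (e - d x a); split; [lra|].
  intros y Hy; exists a; split; auto.
  pose proof (Ht y x a); rewrite (Hs y x) in *; lra.
Qed.

Lemma prob_ball_tight m : prob_measure d m ->
  forall x0 tau, 0 < tau -> exists r, 1 - tau <= m (fun x => d x0 x < r).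
Proof.
  intros Hm x0 tau Htau.
  pose proof (proj1 Hd) as Hpos.
  pose (ball := fun k : nat => fun x => d x0 x < INR k).
  pose (ring := fun k x => ball (S k) x /\ ~ ball k x).
  assert (Hball : forall k, borel d (ball k)) by (intros k; apply open_borel, open_ball).
  assert (Hring : forall k, borel d (ring k))
    by (intros k; apply borel_inter; auto using borel_compl).
  assert (Hdisj : forall i j x, i <> j -> ring i x -> ring j x -> False).
  { intros i j x Hij [H1 H2] [H3 H4]; unfold ball in *.
    destruct (Nat.lt_total i j) as [Hl|[Hl|Hl]]; [|tauto|].
    - apply H4; eapply Rlt_le_trans; [exact H1|apply le_INR; lia].
    - apply H2; eapply Rlt_le_trans; [exact H3|apply le_INR; lia]. }
  pose proof (proj2 (proj2 Hm) ring Hring Hdisj) as Hs.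
  replace (fun x => exists i, ring i x) with (fun _ : T => True) in Hs.
  2:{ apply pred_ext; intros x; split; auto; intros _.
      destruct (INR_archimed 1 (d x0 x)) as [k Hk]; [lra|].
      rewrite Rmult_1_r in Hk; induction k as [|k IH].
      - simpl in Hk; pose proof (Hpos x0 x); lra.
      - destruct (classic (ball k x)) as [Hb|Hb]; [exact (IH Hb)|].
        exists k; split; auto. }
  rewrite (proj1 (proj2 Hm)) in Hs.
  assert (Hpart : forall k, sum_f_R0 (fun i => m (ring i)) k = m (ball (S k))).
  { induction k as [|k IH]; simpl sum_f_R0.
    - f_equal; apply pred_ext; intros x; unfold ring, ball; simpl.
      pose proof (Hpos x0 x); split; [tauto|intros; split; auto; lra].
    - rewrite IH, <- (prob_disjoint_union d m Hm); auto.
      + f_equal; apply pred_ext; intros x; unfold ring, ball; split.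
        * intros [h|[h _]]; auto; eapply Rlt_trans; [exact h|apply lt_INR; lia].
        * intros h; destruct (classic (d x0 x < INR (S k))); tauto.
      + intros x h [_ h']; auto. }
  destruct (Hs tau Htau) as [N HN]; specialize (HN N (le_n _)).
  rewrite Hpart in HN; unfold Rdist in HN; apply Rabs_def2 in HN.
  exists (INR (S N)); unfold ball in HN; lra.
Qed.

End MetricSets.

Lemma mm_inhabited (M : mmspace) : inhabited M.
Proof.
  apply NNPP; intros H; pose proof (mm_prob M) as Hm.
  pose proof (proj1 (proj2 Hm)) as H1.
  replace (fun _ : M => True) with (fun _ : M => False) in H1
    by (apply pred_ext; intros x; split; [intros []|intros _; apply H; constructor; exact x]).
  rewrite (prob_empty _ _ Hm) in H1; lra.
Qed.

Definition F2_metric (G : R -> R -> R) : Prop :=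
  forall (T U : Type) (dT : T -> T -> R) (dU : U -> U -> R),
    is_metric dT -> is_metric dU -> is_metric (dF G dT dU).

Lemma in_F2_metric G : in_F2 G -> F2_metric G.
Proof. intros HG; exact (proj2 (proj2 HG)). Qed.

Lemma F2_metric_swap G : F2_metric G -> F2_metric (fun s t => G t s).
Proof.
  intros HG T U dT dU HT HU.
  destruct (HG U T dU dT HU HT) as [Hp [Hz [Hs Ht]]].
  split; [|split; [|split]]; intros [x y] [x' y'].
  - exact (Hp (y, x) (y', x')).
  - unfold dF at 1; simpl; rewrite (Hz (y, x) (y', x')).
    split; intros E; inversion E; reflexivity.
  - exact (Hs (y, x) (y', x')).
  - intros [x'' y'']; exact (Ht (y, x) (y', x') (y'', x'')).
Qed.

Definition dist_R (x y : R) : R := Rabs (x - y).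

Lemma dist_R_metric : is_metric dist_R.
Proof.
  unfold dist_R; split; [|split; [|split]].
  - intros; apply Rabs_pos.
  - intros x y; split; intros H.
    + destruct (Req_dec x y) as [|Hxy]; auto.
      exfalso; apply (Rabs_no_R0 (x - y)); auto; lra.
    + subst; rewrite Rminus_diag; apply Rabs_R0.
  - intros; apply Rabs_minus_sym.
  - intros x y z; replace (x - z) with ((x - y) + (y - z)) by ring; apply Rabs_triang.
Qed.

Definition dist_R_trunc (c x y : R) : R := Rmin (Rabs (x - y)) c.

Lemma dist_R_trunc_metric c : 0 < c -> is_metric (dist_R_trunc c).
Proof.
  intros Hc; unfold dist_R_trunc, Rmin; split; [|split; [|split]].
  - intros x y; destruct (Rle_dec _ _); [apply Rabs_pos|lra].
  - intros x y; split; intros H.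
    + destruct (Rle_dec _ _); [|lra].
      destruct (Req_dec x y) as [|Hxy]; auto.
      exfalso; apply (Rabs_no_R0 (x - y)); auto; lra.
    + subst; rewrite Rminus_diag, Rabs_R0; destruct (Rle_dec _ _); lra.
  - intros; rewrite Rabs_minus_sym; auto.
  - intros x y z; pose proof (Rabs_triang (x - y) (y - z)) as Htri.
    replace (x - y + (y - z)) with (x - z) in Htri by ring.
    pose proof (Rabs_pos (x - y)); pose proof (Rabs_pos (y - z)).
    repeat destruct (Rle_dec _ _); lra.
Qed.

Section F2Metric.
Variable G : R -> R -> R.
Hypothesis HG : F2_metric G.

Let HGR : is_metric (dF G dist_R dist_R) := HG _ _ _ _ dist_R_metric dist_R_metric.

Lemma F2_zero : G 0 0 = 0.
Proof.
  pose proof (proj2 (proj1 (proj2 HGR) (0, 0) (0, 0)) eq_refl) as H.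
  unfold dF, dist_R in H; simpl in H; rewrite Rminus_0_r, Rabs_R0 in H; exact H.
Qed.

Lemma F2_subadd s1 s2 t1 t2 : 0 <= s1 -> 0 <= s2 -> 0 <= t1 -> 0 <= t2 ->
  G (s1 + s2) (t1 + t2) <= G s1 t1 + G s2 t2.
Proof.
  intros Hs1 Hs2 Ht1 Ht2.
  pose proof (proj2 (proj2 (proj2 HGR)) (0, 0) (s1, t1) (s1 + s2, t1 + t2)) as Htri.
  unfold dF, dist_R in Htri; simpl in Htri.
  replace (s1 - (s1 + s2)) with (- s2) in Htri by ring.
  replace (t1 - (t1 + t2)) with (- t2) in Htri by ring.
  rewrite !Rminus_0_l, !Rabs_Ropp, !Rabs_right in Htri by lra; exact Htri.
Qed.

Lemma F2_pos_l r : 0 < r -> 0 < G r 0.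
Proof.
  intros Hr; destruct HGR as [Hp [Hz _]].
  assert (E : dF G dist_R dist_R (r, 0) (0, 0) = G r 0).
  { unfold dF, dist_R; simpl; rewrite !Rminus_0_r, Rabs_R0, Rabs_right by lra; reflexivity. }
  pose proof (Hp (r, 0) (0, 0)) as H; rewrite E in H; destruct H as [|H]; auto.
  rewrite <- E in H; symmetry in H; apply Hz in H; inversion H; lra.
Qed.

(* Triangle inequality for the metric with the first factor truncated at [s],
   through the point (2s + r, t). *)
Lemma F2_axis_le_l r s t : 0 < r -> r <= s -> 0 <= t -> G r 0 <= 2 * G s t.
Proof.
  intros Hr Hrs Ht.
  pose proof (proj2 (proj2 (proj2 (HG _ _ _ _ (dist_R_trunc_metric s ltac:(lra))
    dist_R_metric))) (0, 0) (2 * s + r, t) (r, 0)) as Htri.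
  unfold dF, dist_R, dist_R_trunc, Rmin in Htri; simpl in Htri.
  replace (2 * s + r - r) with (2 * s) in Htri by ring.
  rewrite !Rminus_0_l, !Rminus_0_r, !Rabs_Ropp, Rabs_R0, (Rabs_right t),
    (Rabs_right r), (Rabs_right (2 * s + r)), (Rabs_right (2 * s)) in Htri by lra.
  repeat destruct (Rle_dec _ _); lra.
Qed.

Lemma open_preimage_fst {T U : Type} (dT : T -> T -> R) (dU : U -> U -> R) :
  is_metric dU -> forall O, Defs.open_set dT O ->
  Defs.open_set (dF G dT dU) (fun z => O (fst z)).
Proof.
  intros HU O HO [x y] Hx; simpl in Hx.
  destruct (HO x Hx) as [r [Hr Hball]].
  exists (G r 0 / 2); pose proof (F2_pos_l r Hr); split; [lra|].
  intros [x' y'] H'; unfold dF in H'; simpl in *; apply Hball.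
  destruct (Rlt_or_le (dT x x') r) as [|Hle]; auto.
  pose proof (F2_axis_le_l r _ _ Hr Hle (proj1 HU y y')); lra.
Qed.

End F2Metric.

Lemma open_preimage_snd G {T U : Type} (dT : T -> T -> R) (dU : U -> U -> R) :
  F2_metric G -> is_metric dT -> forall O, Defs.open_set dU O ->
  Defs.open_set (dF G dT dU) (fun z => O (snd z)).
Proof.
  intros HG HT O HO [x y] Hy.
  destruct (open_preimage_fst _ (F2_metric_swap G HG) dU dT HT O HO (y, x) Hy)
    as [r [Hr Hball]].
  exists r; split; auto; intros [x' y'] H; exact (Hball (y', x') H).
Qed.

Lemma borel_rect G {T U : Type} (dT : T -> T -> R) (dU : U -> U -> R) A B :
  F2_metric G -> is_metric dT -> is_metric dU -> borel dT A -> borel dU B ->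
  borel (dF G dT dU) (fun z => A (fst z) /\ B (snd z)).
Proof.
  intros HG HT HU HA HB; apply borel_inter.
  - apply (borel_map_open_preimage _ dT fst); auto.
    exact (open_preimage_fst G HG dT dU HU).
  - apply (borel_map_open_preimage _ dU snd); auto.
    exact (open_preimage_snd G dT dU HG HT).
Qed.

Lemma eventually_forall_le (Q : nat -> nat -> Prop) M :
  (forall k, (k <= M)%nat -> exists N, forall n, (N <= n)%nat -> Q k n) ->
  exists N, forall k, (k <= M)%nat -> forall n, (N <= n)%nat -> Q k n.
Proof.
  induction M as [|M IH]; intros H.
  - destruct (H 0%nat (le_n _)) as [N HN]; exists N; intros k Hk.
    replace k with 0%nat by lia; auto.
  - destruct IH as [N1 HN1]; [intros k Hk; apply H; lia|].
    destruct (H (S M) (le_n _)) as [N2 HN2]; exists (max N1 N2); intros k Hk n Hn.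
    destruct (Nat.eq_dec k (S M)); [subst; apply HN2|apply HN1]; lia.
Qed.

Lemma grid_floor (h s : R) M : 0 < h -> 0 <= s ->
  exists k, (k <= M)%nat /\ INR k * h <= s /\ (s < INR k * h + h \/ k = M).
Proof.
  intros Hh Hs; induction M as [|M IH].
  - exists 0%nat; simpl; split; [lia|split; [lra|auto]].
  - destruct IH as [k [Hk [H1 H2]]].
    destruct (Rlt_or_le s (INR k * h + h)) as [Hl|Hl].
    + exists k; split; [lia|auto].
    + destruct H2 as [H2|H2]; [lra|subst].
      exists (S M); rewrite S_INR; split; [lia|split; [lra|auto]].
Qed.

(* [eta n] is the infimum of the errors admissible for [n], plus [1/(n+1)] so
   that it is admissible itself. *)
Lemma exists_cv0_witness (P : nat -> R -> Prop) :
  (forall n a b, P n a -> a <= b -> P n b) ->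
  (forall n, exists a, P n a) ->
  (forall g, 0 < g -> exists N, forall n, (N <= n)%nat -> P n g) ->
  exists eta, Un_cv eta 0 /\ forall n, P n (eta n).
Proof.
  intros Hmono Hex Hev.
  pose (E := fun n v => v <= 0 /\ P n (- v)).
  assert (Hbound : forall n, bound (E n)) by (intros n; exists 0; intros v [h _]; auto).
  assert (Hne : forall n, exists v, E n v).
  { intros n; destruct (Hex n) as [a Ha]; exists (- Rmax a 0); split.
    - pose proof (Rmax_r a 0); lra.
    - rewrite Ropp_involutive; apply (Hmono n a); [exact Ha|apply Rmax_l]. }
  pose (l := fun n => proj1_sig (completeness (E n) (Hbound n) (Hne n))).
  assert (Hl : forall n, is_lub (E n) (l n))
    by (intros n; unfold l; destruct completeness; auto).
  assert (Hl0 : forall n, l n <= 0) by (intros n; apply (proj2 (Hl n)); intros v [h _]; auto).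
  assert (Hinv : forall n, 0 < / INR (S n)) by (intros n; apply Rinv_0_lt_compat, lt_0_INR; lia).
  exists (fun n => - l n + / INR (S n)); split.
  - intros e He; destruct (Hev (e / 2) ltac:(lra)) as [N1 HN1].
    destruct (archimed_cor1 (e / 2) ltac:(lra)) as [N2 [HN2 HN2']].
    exists (max N1 N2); intros n Hn; unfold R_dist.
    assert (HEn : E n (- (e / 2)))
      by (split; [lra|rewrite Ropp_involutive; apply HN1; lia]).
    pose proof (proj1 (Hl n) _ HEn); pose proof (Hl0 n); pose proof (Hinv n).
    assert (/ INR (S n) <= / INR N2)
      by (apply Rinv_le_contravar; [apply lt_0_INR; lia|apply le_INR; lia]).
    rewrite Rminus_0_r, Rabs_right; lra.
  - intros n; apply NNPP; intros Hn; pose proof (Hinv n).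
    assert (l n <= l n - / INR (S n)); [|lra].
    apply (proj2 (Hl n)); intros v [hv Pv].
    destruct (Rle_dec v (l n - / INR (S n))) as [|h]; auto.
    exfalso; apply Hn; apply (Hmono n (- v)); [exact Pv|lra].
Qed.

Section LimitFunction.
Variables (Fs : nat -> R -> R -> R) (F : R -> R -> R).
Hypothesis HF : in_F2 F.
Hypothesis Hconv : forall s t, 0 <= s -> 0 <= t -> Un_cv (fun n => Fs n s t) (F s t).
Hypothesis Hinf : forall s t, 0 <= s -> 0 <= t ->
  exists i : nat -> R,
    (forall n, is_glb (fun v => exists s' t', s <= s' /\ t <= t' /\ v = Fs n s' t') (i n))
    /\ Un_cv (fun n => Fs n s t - i n) 0.

Lemma eventually_ge_limit s0 t0 g : 0 <= s0 -> 0 <= t0 -> 0 < g ->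
  exists N, forall n, (N <= n)%nat -> forall s t, s0 <= s -> t0 <= t ->
    F s0 t0 - g <= Fs n s t.
Proof.
  intros Hs0 Ht0 Hg; destruct (Hinf s0 t0 Hs0 Ht0) as [i [Hglb Hgap]].
  destruct (Hgap (g / 2) ltac:(lra)) as [N1 HN1].
  destruct (Hconv s0 t0 Hs0 Ht0 (g / 2) ltac:(lra)) as [N2 HN2].
  exists (max N1 N2); intros n Hn s t Hs Ht.
  specialize (HN1 n ltac:(lia)); specialize (HN2 n ltac:(lia)).
  unfold R_dist in HN1, HN2; rewrite Rminus_0_r in HN1.
  apply Rabs_def2 in HN1; apply Rabs_def2 in HN2.
  assert (i n <= Fs n s t) by (apply (proj1 (Hglb n)); exists s, t; auto).
  lra.
Qed.

Lemma limit_monotone s t s' t' : 0 <= s -> s <= s' -> 0 <= t -> t <= t' ->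
  F s t <= F s' t'.
Proof.
  intros Hs Hss' Ht Htt'; apply Rle_plus_epsilon; intros g Hg.
  destruct (eventually_ge_limit s t (g / 2) Hs Ht ltac:(lra)) as [N1 HN1].
  destruct (Hconv s' t' ltac:(lra) ltac:(lra) (g / 2) ltac:(lra)) as [N2 HN2].
  specialize (HN1 (max N1 N2) ltac:(lia) s' t' Hss' Htt').
  specialize (HN2 (max N1 N2) ltac:(lia)); unfold R_dist in HN2.
  apply Rabs_def2 in HN2; lra.
Qed.

(* Monotonicity and subadditivity of [F] reduce [F a b] to [F] at a grid point
   below [(s, t)] plus [F] near the origin, and on the finitely many grid
   points [eventually_ge_limit] holds uniformly. *)
Lemma eventually_ge_limit_uniform g K : 0 < g ->
  exists rho N, 0 < rho /\ forall n, (N <= n)%nat ->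
    forall s t a b, 0 <= s -> 0 <= t -> 0 <= a <= K -> 0 <= b <= K ->
      a <= s + rho -> b <= t + rho -> F a b <= Fs n s t + g.
Proof.
  intros Hg; destruct HF as [Fcont [_ Fmet]].
  pose proof (F2_zero F Fmet) as F00.
  destruct (Fcont 0 0 (Rle_refl _) (Rle_refl _) (g / 2) ltac:(lra)) as [r0 [Hr0 Hnear0]].
  pose (h := r0 / 3); assert (Hh : 0 < h) by (unfold h; lra).
  destruct (INR_archimed h K Hh) as [M HM].
  destruct (eventually_forall_le (fun k n => forall l, (l <= M)%nat -> forall s t,
      INR k * h <= s -> INR l * h <= t -> F (INR k * h) (INR l * h) - g / 2 <= Fs n s t) M)
    as [N HN].
  { intros k _.
    destruct (eventually_forall_le (fun l n => forall s t, INR k * h <= s -> INR l * h <= t ->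
        F (INR k * h) (INR l * h) - g / 2 <= Fs n s t) M) as [N HN].
    - intros l _; apply eventually_ge_limit; try lra;
        apply Rmult_le_pos; auto using pos_INR; lra.
    - exists N; intros n Hn l Hl; exact (HN l Hl n Hn). }
  exists h, N; split; [exact Hh|]; intros n Hn s t a b Hs Ht Ha Hb Has Hbt.
  destruct (grid_floor h s M Hh Hs) as [k [Hk [Hks Hsk]]].
  destruct (grid_floor h t M Hh Ht) as [l [Hl [Hlt Htl]]].
  assert (Hak : a <= INR k * h + (h + h)) by (destruct Hsk; [|subst k]; lra).
  assert (Hbl : b <= INR l * h + (h + h)) by (destruct Htl; [|subst l]; lra).
  assert (Hk0 : 0 <= INR k * h) by (apply Rmult_le_pos; auto using pos_INR; lra).
  assert (Hl0 : 0 <= INR l * h) by (apply Rmult_le_pos; auto using pos_INR; lra).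
  pose proof (limit_monotone a b _ _ (proj1 Ha) Hak (proj1 Hb) Hbl) as Hmono.
  pose proof (F2_subadd F Fmet (INR k * h) (h + h) (INR l * h) (h + h)
                Hk0 ltac:(lra) Hl0 ltac:(lra)) as Hsub.
  pose proof (Hnear0 (h + h) (h + h) ltac:(lra) ltac:(lra)) as Hsmall.
  rewrite !Rminus_0_r, F00, Rminus_0_r, Rabs_right in Hsmall by lra.
  specialize (Hsmall ltac:(unfold h; lra) ltac:(unfold h; lra)).
  apply Rabs_def2 in Hsmall; pose proof (HN k Hk n Hn l Hl s t Hks Hlt); lra.
Qed.

End LimitFunction.

Lemma mm_dist_nonneg (M : mmspace) (x y : M) : 0 <= mm_dist M x y.
Proof. exact (proj1 (mm_metric M) x y). Qed.

Lemma lip1_up_to_weaken {T U : Type} (dT : T -> T -> R) m (dU : U -> U -> R) f a b :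
  lip1_up_to dT m dU f a -> a <= b -> lip1_up_to dT m dU f b.
Proof.
  intros [X0 [HX0 [Hm Hd]]] Hab; exists X0; split; [exact HX0|split; [lra|]].
  intros x x' Hx Hx'; pose proof (Hd x x' Hx Hx'); lra.
Qed.

Lemma lip1_up_to_ex {T U : Type} (dT : T -> T -> R) m (dU : U -> U -> R) f :
  exists a, lip1_up_to dT m dU f a.
Proof.
  exists (Rabs (1 - m (fun _ => False))), (fun _ => False).
  split; [apply borel_empty|split; [|intros _ _ []]].
  pose proof (Rle_abs (1 - m (fun _ => False))); lra.
Qed.

(* Off a set of measure [2|ep| + 2tau], [p] is 1-Lipschitz up to [|ep|] and
   maps into the [(1 + tau)]-neighbourhood of the ball [B(x0, r)], because
   [pi(p_* m, m_X) <= ep] moves mass [>= 1 - tau] of that ball. *)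
Lemma lip1_good_set (Xn X : mmspace) (p : Xn -> X) (ep tau r : R) (x0 : X) :
  0 < tau -> Rabs ep <= 1 ->
  borel_map (mm_dist Xn) (mm_dist X) p ->
  lip1_up_to (mm_dist Xn) (mm_meas Xn) (mm_dist X) p ep ->
  prokhorov_le (mm_dist X) (pushforward p (mm_meas Xn)) (mm_meas X) ep ->
  1 - tau <= mm_meas X (fun x => mm_dist X x0 x < r) ->
  exists X0, borel (mm_dist Xn) X0 /\ 1 - (2 * Rabs ep + 2 * tau) <= mm_meas Xn X0 /\
    forall x x', X0 x -> X0 x' ->
      mm_dist X (p x) (p x') <= mm_dist Xn x x' + Rabs ep /\
      mm_dist X (p x) (p x') <= 2 * (r + 1 + tau).
Proof.
  intros Htau Hep Hp [X1 [HX1 [HX1m HX1d]]] Hpi Hball.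
  pose proof (mm_metric X) as HX; destruct HX as [_ [_ [Hs Ht]]].
  pose proof (Rle_abs ep).
  destruct (Hpi (Rabs ep + tau) ltac:(lra)) as [e [He0 [He1 Hcond]]].
  pose (B := fun x => mm_dist X x0 x < r).
  assert (HB : borel (mm_dist X) B) by apply open_borel, open_ball, mm_metric.
  specialize (Hcond B HB); unfold pushforward in Hcond.
  assert (Hpre : borel (mm_dist Xn) (fun x => nbhd (mm_dist X) e B (p x)))
    by apply Hp, open_borel, open_nbhd, mm_metric.
  exists (fun x => X1 x /\ nbhd (mm_dist X) e B (p x)); split; [|split].
  - apply borel_inter; auto.
  - pose proof (prob_inter_ge _ _ (mm_prob Xn) _ _ HX1 Hpre); fold B in Hball; lra.
  - intros x x' [h1 [a [Ha Hxa]]] [h1' [a' [Ha' Hxa']]]; split.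
    + pose proof (HX1d x x' h1 h1'); lra.
    + unfold B in Ha, Ha'.
      pose proof (Ht (p x) a (p x')); pose proof (Ht a x0 (p x'));
        pose proof (Ht x0 a' (p x')).
      rewrite (Hs a x0), (Hs a' (p x')) in *; lra.
Qed.

Lemma lip1_up_to_product (Xn Yn X Y : mmspace) (Gn G : R -> R -> R)
  (mu : (Xn * Yn -> Prop) -> R) (p : Xn -> X) (q : Yn -> Y)
  (X0 : Xn -> Prop) (Y0 : Yn -> Prop) (a b eta : R) :
  F2_metric Gn -> is_product_measure Gn Xn Yn mu ->
  borel (mm_dist Xn) X0 -> borel (mm_dist Yn) Y0 ->
  1 - a <= mm_meas Xn X0 -> 1 - b <= mm_meas Yn Y0 -> 0 <= a -> 0 <= b -> a + b <= eta ->
  (forall x x' y y', X0 x -> X0 x' -> Y0 y -> Y0 y' ->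
     G (mm_dist X (p x) (p x')) (mm_dist Y (q y) (q y'))
       <= Gn (mm_dist Xn x x') (mm_dist Yn y y') + eta) ->
  lip1_up_to (dF Gn (mm_dist Xn) (mm_dist Yn)) mu (dF G (mm_dist X) (mm_dist Y))
    (fun z => (p (fst z), q (snd z))) eta.
Proof.
  intros HGn [_ Hrect] HX0 HY0 HmX HmY Ha Hb Hab Hd.
  exists (fun z => X0 (fst z) /\ Y0 (snd z)); split; [|split].
  - apply borel_rect; auto using mm_metric.
  - rewrite Hrect; auto.
    pose proof (prob_nonneg _ _ (mm_prob Xn) _ HX0).
    pose proof (prob_nonneg _ _ (mm_prob Yn) _ HY0).
    destruct (Rle_dec a 1); destruct (Rle_dec b 1); nra.
  - intros [x y] [x' y'] [hx hy] [hx' hy']; exact (Hd x x' y y' hx hx' hy hy').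
Qed.

Theorem mainTheorem18
  (Xs Ys : nat -> mmspace) (X Y : mmspace)
  (Fs : nat -> R -> R -> R) (F : R -> R -> R)
  (HFs : forall n, in_F2 (Fs n)) (HF : in_F2 F)
  (Hconv : forall s t, 0 <= s -> 0 <= t -> Un_cv (fun n => Fs n s t) (F s t))
  (Hinf : forall s t, 0 <= s -> 0 <= t ->
     exists i : nat -> R,
       (forall n, is_glb (fun v => exists s' t', s <= s' /\ t <= t' /\ v = Fs n s' t') (i n))
       /\ Un_cv (fun n => Fs n s t - i n) 0)
  (p : forall n, Xs n -> X) (q : forall n, Ys n -> Y)
  (eps delta : nat -> R)
  (Hpb : forall n, borel_map (mm_dist (Xs n)) (mm_dist X) (p n))
  (Hqb : forall n, borel_map (mm_dist (Ys n)) (mm_dist Y) (q n))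
  (Hpl : forall n, lip1_up_to (mm_dist (Xs n)) (mm_meas (Xs n)) (mm_dist X) (p n) (eps n))
  (Hql : forall n, lip1_up_to (mm_dist (Ys n)) (mm_meas (Ys n)) (mm_dist Y) (q n) (delta n))
  (Hpp : forall n, prokhorov_le (mm_dist X) (pushforward (p n) (mm_meas (Xs n))) (mm_meas X) (eps n))
  (Hqp : forall n, prokhorov_le (mm_dist Y) (pushforward (q n) (mm_meas (Ys n))) (mm_meas Y) (delta n))
  (Heps : Un_cv eps 0) (Hdelta : Un_cv delta 0)
  (mu : forall n, (Xs n * Ys n -> Prop) -> R)
  (Hmu : forall n, is_product_measure (Fs n) (Xs n) (Ys n) (mu n)) :
  exists eta : nat -> R, Un_cv eta 0 /\
    forall n, lip1_up_to (dF (Fs n) (mm_dist (Xs n)) (mm_dist (Ys n))) (mu n)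
                (dF F (mm_dist X) (mm_dist Y))
                (fun z : Xs n * Ys n => (p n (fst z), q n (snd z))) (eta n).
Proof.
  apply (exists_cv0_witness (fun n => lip1_up_to (dF (Fs n) (mm_dist (Xs n)) (mm_dist (Ys n)))
    (mu n) (dF F (mm_dist X) (mm_dist Y)) (fun z => (p n (fst z), q n (snd z)))));
    [intros n a b; apply lip1_up_to_weaken|intros n; apply lip1_up_to_ex|].
  intros g Hg.
  destruct (mm_inhabited X) as [x0]; destruct (mm_inhabited Y) as [y0].
  destruct (prob_ball_tight _ (mm_metric X) _ (mm_prob X) x0 (g / 8)) as [rX HrX]; [lra|].
  destruct (prob_ball_tight _ (mm_metric Y) _ (mm_prob Y) y0 (g / 8)) as [rY HrY]; [lra|].
  pose (K := 2 * (Rmax rX rY + 1 + g / 8)).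
  destruct (eventually_ge_limit_uniform Fs F HF Hconv Hinf g K Hg)
    as [rho [N0 [Hrho Hunif]]].
  pose (e := Rmin (g / 8) (Rmin 1 rho)).
  assert (He : 0 < e <= g / 8 /\ e <= 1 /\ e <= rho).
  { unfold e, Rmin; repeat destruct (Rle_dec _ _); lra. }
  destruct (Heps e ltac:(lra)) as [N1 HN1]; destruct (Hdelta e ltac:(lra)) as [N2 HN2].
  exists (max N0 (max N1 N2)); intros n Hn.
  specialize (HN1 n ltac:(lia)); specialize (HN2 n ltac:(lia)).
  unfold R_dist in HN1, HN2; rewrite Rminus_0_r in HN1, HN2.
  destruct (lip1_good_set _ _ (p n) (eps n) (g / 8) rX x0 ltac:(lra) ltac:(lra)
              (Hpb n) (Hpl n) (Hpp n) HrX) as [X0 [HX0 [HX0m HX0d]]].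
  destruct (lip1_good_set _ _ (q n) (delta n) (g / 8) rY y0 ltac:(lra) ltac:(lra)
              (Hqb n) (Hql n) (Hqp n) HrY) as [Y0 [HY0 [HY0m HY0d]]].
  apply (lip1_up_to_product _ _ _ _ _ _ _ _ _ X0 Y0 _ _ _ (in_F2_metric _ (HFs n))
           (Hmu n) HX0 HY0 HX0m HY0m); try (pose proof (Rabs_pos (eps n));
           pose proof (Rabs_pos (delta n)); lra).
  intros x x' y y' hx hx' hy hy'.
  destruct (HX0d x x' hx hx'); destruct (HY0d y y' hy hy').
  pose proof (mm_dist_nonneg X (p n x) (p n x')); pose proof (mm_dist_nonneg Y (q n y) (q n y')).
  pose proof (mm_dist_nonneg (Xs n) x x'); pose proof (mm_dist_nonneg (Ys n) y y').
  pose proof (Rmax_l rX rY); pose proof (Rmax_r rX rY).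
  apply (Hunif n ltac:(lia)); try split; unfold K; lra.
Qed.
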